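(* Let $\vec r_1,\vec r_2$ be in the closed unit ball of $\mathbb{R}^3$, both orthogonal to $(0,0,1)$, with $r_i=|\vec r_i|$. Then $$d^2_{z,2}(\rho(\vec r_1),\rho(\vec r_2))=\sqrt{1-\min(r_1,r_2)^2}-\sqrt{1-\max(r_1,r_2)^2}.$$
   Context: Qubit setting: $\mathcal{H}=\mathbb{C}^2$, $\mathcal{H}^*$ is identified with $\mathbb{C}^2$ via the dual basis, and $A^T$ is the usual matrix transpose; operators on $\mathcal{H}\otimes\mathcal{H}^*$ are $4\times4$ matrices in the basis $e_1\otimes e_1^*,e_1\otimes e_2^*,e_2\otimes e_1^*,e_2\otimes e_2^*$. $\sigma_x=\begin{pmatrix}0&1\\1&0\end{pmatrix}$, $\sigma_y=\begin{pmatrix}0&-i\\i&0\end{pmatrix}$, $\sigma_z=\begin{pmatrix}1&0\\0&-1\end{pmatrix}$, $\vec\sigma=(\sigma_x,\sigma_y,\sigma_z)$, and $\rho(\vec r)=\tfrac12(I+\vec r\cdot\vec\sigma)$ for $|\vec r|\le1$. The set of couplings of states $\rho,\omega$ is $\mathcal{C}(\rho,\omega)=\{\Pi\in\mathcal{S}(\mathcal{H}\otimes\mathcal{H}^* ):\mathrm{tr}_{\mathcal{H}^*}[\Pi]=\omega,\ \mathrm{tr}_{\mathcal{H}}[\Pi]=\rho^T\}$. $C_{z,2}=(\sigma_z\otimes I^T-I\otimes\sigma_z^T)^2=\mathrm{diag}(0,4,4,0)$, $D^2_{z,2}(\rho,\omega)=\min_{\Pi\in\mathcal{C}(\rho,\omega)}\mathrm{tr}[\Pi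 C_{z,2}]$, and $d_{z,2}(\rho,\omega)=\big(D^2_{z,2}(\rho,\omega)-\tfrac12(D^2_{z,2}(\rho,\rho)+D^2_{z,2}(\omega,\omega))\big)^{1/2}$. *)

From HB Require Import structures.
From mathcomp Require Import all_boot all_order all_algebra.
From mathcomp Require Import complex.
From mathcomp Require Import boolp classical_sets reals.
Set Implicit Arguments. Unset Strict Implicit. Unset Printing Implicit Defensive.
Import Order.TTheory GRing.Theory Num.Theory.
Local Open Scope ring_scope.
Local Open Scope complex_scope.

Section Qubit.
Variable R : realType.
Local Notation C := R[i].

Definition adj m n (A : 'M[C]_(m, n)) : 'M[C]_(n, m) :=
  (map_mx (fun z => z^*) A)^T.

Definition psd n (A : 'M[C]_n) : Prop :=
  A = adj A /\ forall v : 'cV[C]_n, 0 <= (adj v *m A *m v) 0 0.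

Definition is_state n (A : 'M[C]_n) : Prop := psd A /\ \tr A = 1.

(* basis of H (x) H^* : e_i (x) e_j^* has index 2 i + j,
   i.e. ordering e1e1*, e1e2*, e2e1*, e2e2* *)
Definition tidx (i j : 'I_2) : 'I_4 := inord (2 * i + j).

Definition ptr_Hdual (P : 'M[C]_4) : 'M[C]_2 :=
  \matrix_(i, i') \sum_(j < 2) P (tidx i j) (tidx i' j).
Definition ptr_H (P : 'M[C]_4) : 'M[C]_2 :=
  \matrix_(j, j') \sum_(i < 2) P (tidx i j) (tidx i j').

Definition coupling (rho omega : 'M[C]_2) (P : 'M[C]_4) : Prop :=
  is_state P /\ ptr_Hdual P = omega /\ ptr_H P = rho^T.

Definition Cz2 : 'M[C]_4 :=
  \matrix_(a, b) (if a == b then (if (val a == 1)%N || (val a == 2)%N then 4 else 0) else 0).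

(* D^2_{z,2}(rho, omega) = min over couplings of tr[P C_{z,2}]
   (the trace is real for Hermitian P; the minimum is attained,
    so it coincides with the infimum taken here) *)
Definition D2z (rho omega : 'M[C]_2) : R :=
  inf [set x : R | exists P : 'M[C]_4,
         coupling rho omega P /\ \tr (P *m Cz2) = x%:C].

Definition dz2 (rho omega : 'M[C]_2) : R :=
  Num.sqrt (D2z rho omega - (D2z rho rho + D2z omega omega) / 2).

Definition sigx : 'M[C]_2 := \matrix_(a, b) (if a == b then 0 else 1).
Definition sigy : 'M[C]_2 :=
  \matrix_(a, b) (if a == b then 0 else if val a == 0%N then - 'i else 'i).
Definition sigz : 'M[C]_2 :=
  \matrix_(a, b) (if a == b then (if val a == 0%N then 1 else -1) else 0).

Definition cx (r : 'rV[R]_3) : R := r 0 (inord 0).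
Definition cy (r : 'rV[R]_3) : R := r 0 (inord 1).
Definition cz (r : 'rV[R]_3) : R := r 0 (inord 2).
Definition dot3 (u v : 'rV[R]_3) : R := \sum_(i < 3) u 0 i * v 0 i.
Definition norm3 (r : 'rV[R]_3) : R := Num.sqrt (dot3 r r).
Definition ez : 'rV[R]_3 := \row_(i < 3) (if val i == 2%N then 1 else 0).

Definition bloch (r : 'rV[R]_3) : 'M[C]_2 :=
  (1 / 2) *: (1%:M + (cx r)%:C *: sigx + (cy r)%:C *: sigy + (cz r)%:C *: sigz).
End Qubit.

(* For equatorial Bloch vectors both marginals have diagonal (1/2, 1/2), so every coupling P
   has P11 = P22 = d, P00 = P33 = 1/2 - d and cost tr[P C_{z,2}] = 8d.  The off-diagonal
   marginal entry (r_x -+ i r_y)/2 of either state is a sum of two entries of P, each bounded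
   through a 2x2 principal minor by d (1/2 - d); hence |r|^2 <= 16 d (1/2 - d), that is
   8d >= 2 - 2 sqrt(1 - |r|^2), for both r = r1 and r = r2.  Conversely, with M = max |r_i| and
   S = sqrt(1 - M^2), the explicit coupling built from p^2 = (1 + S)/4, q^2 = (1 - S)/4 and the
   phases of r1, r2 costs 8 q^2 = 2 - 2S. *)

From HB Require Import structures.
From mathcomp Require Import all_boot all_order all_algebra.
From mathcomp Require Import complex.
From mathcomp Require Import boolp classical_sets reals.
From mathcomp Require Import ring lra.
Set Implicit Arguments. Unset Strict Implicit. Unset Printing Implicit Defensive.
Import Order.TTheory GRing.Theory Num.Theory.
Local Open Scope ring_scope.

Lemma big_ord2 (V : nmodType) (F : 'I_2 -> V) :
  \sum_(i < 2) F i = F (inord 0) + F (inord 1).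
Proof.
rewrite !big_ord_recr big_ord0 /= add0r; congr (_ + _).
all: by congr F; apply/val_inj; rewrite /= inordK.
Qed.

Lemma big_ord3 (V : nmodType) (F : 'I_3 -> V) :
  \sum_(i < 3) F i = F (inord 0) + F (inord 1) + F (inord 2).
Proof.
rewrite !big_ord_recr big_ord0 /= add0r; congr (_ + _ + _).
all: by congr F; apply/val_inj; rewrite /= inordK.
Qed.

Lemma big_ord4 (V : nmodType) (F : 'I_4 -> V) :
  \sum_(i < 4) F i = F (inord 0) + F (inord 1) + F (inord 2) + F (inord 3).
Proof.
rewrite !big_ord_recr big_ord0 /= add0r; congr (_ + _ + _ + _).
all: by congr F; apply/val_inj; rewrite /= inordK.
Qed.

Lemma big_one_support {V : nmodType} {n} (F : 'I_n -> V) (k : 'I_n) :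
  (forall i, i != k -> F i = 0) -> \sum_(i < n) F i = F k.
Proof. by move=> F0; rewrite (bigD1 k) //= big1 ?addr0. Qed.

Lemma big_two_support {V : nmodType} {n} (F : 'I_n -> V) (k l : 'I_n) : k != l ->
  (forall i, i != k -> i != l -> F i = 0) -> \sum_(i < n) F i = F k + F l.
Proof.
move=> kl F0; rewrite (bigD1 k) //= (bigD1 l) /=; last by rewrite eq_sym.
by rewrite big1 ?addr0 // => i /andP[ik il]; rewrite F0.
Qed.

Lemma le_mul_of_discriminant (R : realFieldType) (a b c : R) :
  0 <= a -> 0 <= b -> 0 <= c ->
  (forall x, 0 <= x ^+ 2 * a - 2 * x * c + c * b) -> c <= a * b.
Proof.
move=> a0 b0 c0 H; have [b_0|bnz] := eqVneq b 0; last first.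
  have b_gt0 : 0 < b by rewrite lt0r bnz.
  by have := H b; nra.
subst b; rewrite mulr0; have [a_0|anz] := eqVneq a 0.
  by have := H 1; rewrite a_0 !(mulr0, mulr1); lra.
have := H (c / a); have ca : c / a * a = c by rewrite mulfVK.
have : 0 <= c / a by rewrite divr_ge0.
nra.
Qed.

Section PositiveSemidefinite.
Local Open Scope complex_scope.
Variables (R : realType) (n : nat) (P : 'M[R[i]]_n).

Lemma quadratic_formE (v : 'cV[R[i]]_n) :
  (adj v *m P *m v) 0 0 = \sum_(i < n) \sum_(j < n) (v i 0)^* * P i j * v j 0.
Proof.
rewrite !mxE exchange_big /=; apply: eq_bigr => j _.
by rewrite !mxE mulr_suml; apply: eq_bigr => i _; rewrite /adj !mxE.
Qed.

Hypothesis P_psd : psd P.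

Lemma psd_conj_sym i j : P j i = (P i j)^*.
Proof. by case: P_psd => + _ => {1}->; rewrite /adj !mxE. Qed.

Lemma psd_quadratic_ge0 (g : 'I_n -> R[i]) :
  0 <= \sum_(i < n) \sum_(j < n) (g i)^* * P i j * g j.
Proof.
case: P_psd => _ /(_ (\col_i g i)); rewrite quadratic_formE.
by congr (0 <= _); apply: eq_bigr => i _; apply: eq_bigr => j _; rewrite !mxE.
Qed.

Lemma psd_diag k : P k k = (complex.Re (P k k))%:C /\ 0 <= complex.Re (P k k).
Proof.
have := psd_quadratic_ge0 (fun i => if i == k then 1 else 0).
rewrite (@big_one_support _ _ _ k) => [|i ik]; last first.
  by rewrite big1 // => j _; rewrite (negPf ik) raddf0 !mul0r.
rewrite (@big_one_support _ _ _ k) => [|j jk]; last by rewrite (negPf jk) mulr0.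
rewrite eqxx rmorph1 mul1r mulr1.
by case: (P k k) => a b; rewrite lecE /= => /andP[/eqP -> a0].
Qed.

Lemma psd_minor2 k l : k != l ->
  complex.Re (P k l) ^+ 2 + complex.Im (P k l) ^+ 2 <=
    complex.Re (P k k) * complex.Re (P l l).
Proof.
move=> kl; have lk : l != k by rewrite eq_sym.
have [Pkk Pkk0] := psd_diag k; have [Pll Pll0] := psd_diag l.
apply: le_mul_of_discriminant => // [|x]; first by rewrite addr_ge0 ?sqr_ge0.
pose g i := if i == k then x%:C else if i == l then - P l k else 0.
have := psd_quadratic_ge0 g.
have g0 i : i != k -> i != l -> g i = 0 by rewrite /g => /negPf-> /negPf->.
have inner i : \sum_(j < n) (g i)^* * P i j * g j =
    (g i)^* * P i k * g k + (g i)^* * P i l * g l.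
  by apply: big_two_support kl _ => // j jk jl; rewrite (g0 j) // mulr0.
under eq_bigr do rewrite inner.
rewrite (big_two_support kl) => [|i ik il]; last by rewrite (g0 i) // raddf0 !mul0r addr0.
rewrite /g eqxx (negPf lk) eqxx (psd_conj_sym k l) Pkk Pll.
by case: (P k l) => a b; rewrite lecE => /andP[_]; simpc => /= H; nra.
Qed.

End PositiveSemidefinite.

Section Qubit.
Local Open Scope complex_scope.
Variable R : realType.
Local Notation C := R[i].
Local Notation Re := (@complex.Re R).

Lemma tidx00 : tidx (inord 0) (inord 0) = inord 0. Proof. by rewrite /tidx !inordK. Qed.
Lemma tidx01 : tidx (inord 0) (inord 1) = inord 1. Proof. by rewrite /tidx !inordK. Qed.
Lemma tidx10 : tidx (inord 1) (inord 0) = inord 2. Proof. by rewrite /tidx !inordK. Qed.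
Lemma tidx11 : tidx (inord 1) (inord 1) = inord 3. Proof. by rewrite /tidx !inordK. Qed.

Lemma ord2_inord (i : 'I_2) : i = inord 0 \/ i = inord 1.
Proof. by case: i => [[|[|//]] ?]; [left|right]; apply/val_inj; rewrite /= inordK. Qed.

Lemma bloch_equatorial (r : 'rV[R]_3) : cz r = 0 ->
  [/\ bloch r (inord 0) (inord 0) = (1 / 2)%:C, bloch r (inord 1) (inord 1) = (1 / 2)%:C,
      bloch r (inord 0) (inord 1) = (cx r / 2) -i* (cy r / 2)
    & bloch r (inord 1) (inord 0) = (cx r / 2) +i* (cy r / 2)].
Proof.
move=> z; rewrite /bloch !mxE -!val_eqE /= !inordK // z.
have -> : (1 / 2 : C) = (1 / 2 : R)%:C by rewrite rmorphM rmorph1 fmorphV rmorph_nat.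
by split; simpc; apply/eqP; rewrite eq_complex /=; apply/andP; split; apply/eqP; ring.
Qed.

Lemma trace_mul_Cz2 (P : 'M[C]_4) :
  \tr (P *m Cz2 R) = (P (inord 1) (inord 1) + P (inord 2) (inord 2)) *+ 4.
Proof.
rewrite /mxtrace big_ord4 !mxE !big_ord4 !mxE -!val_eqE /= !inordK //= -mulr_natl.
ring.
Qed.

Lemma coupling_equatorial_entries (r1 r2 : 'rV[R]_3) (P : 'M[C]_4) :
  cz r1 = 0 -> cz r2 = 0 -> coupling (bloch r1) (bloch r2) P ->
  let d := Re (P (inord 1) (inord 1)) in
  [/\ Re (P (inord 2) (inord 2)) = d, Re (P (inord 0) (inord 0)) = 1 / 2 - d,
      Re (P (inord 3) (inord 3)) = 1 / 2 - d,
      P (inord 0) (inord 2) + P (inord 1) (inord 3) = (cx r2 / 2) -i* (cy r2 / 2)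
    & P (inord 0) (inord 1) + P (inord 2) (inord 3) = (cx r1 / 2) +i* (cy r1 / 2)].
Proof.
move=> z1 z2 [_ [omega rhoT]].
have [b1_00 b1_11 b1_01 b1_10] := bloch_equatorial z1.
have [b2_00 b2_11 b2_01 b2_10] := bloch_equatorial z2.
have omega_entry (i j : 'I_2) : P (tidx i (inord 0)) (tidx j (inord 0)) +
    P (tidx i (inord 1)) (tidx j (inord 1)) = bloch r2 i j.
  by rewrite -omega mxE big_ord2.
have rho_entry (i j : 'I_2) : P (tidx (inord 0) i) (tidx (inord 0) j) +
    P (tidx (inord 1) i) (tidx (inord 1) j) = bloch r1 j i.
  by move: (congr1 (fun A : 'M_2 => A i j) rhoT); rewrite !mxE big_ord2.
have o00 := omega_entry (inord 0) (inord 0); have o11 := omega_entry (inord 1) (inord 1).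
have o01 := omega_entry (inord 0) (inord 1); have r00 := rho_entry (inord 0) (inord 0).
have r11 := rho_entry (inord 1) (inord 1); have r01 := rho_entry (inord 0) (inord 1).
rewrite b2_00 in o00; rewrite b2_11 in o11; rewrite b2_01 in o01.
rewrite b1_00 in r00; rewrite b1_11 in r11; rewrite b1_10 in r01.
rewrite !tidx00 !tidx01 !tidx10 !tidx11 in o00 o11 o01 r00 r11 r01.
move: o00 o11 r00 r11 => /(congr1 Re) + /(congr1 Re) + /(congr1 Re) + /(congr1 Re).
by rewrite !raddfD /= => e1 e2 e3 e4; split; first [exact: r01 | exact: o01 | lra].
Qed.

End Qubit.

Lemma split_sum_cost_bound (R : rcfType) (d a b u1 v1 u2 v2 : R) :
  u1 + u2 = a / 2 -> v1 + v2 = b / 2 ->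
  u1 ^+ 2 + v1 ^+ 2 <= (1 / 2 - d) * d -> u2 ^+ 2 + v2 ^+ 2 <= d * (1 / 2 - d) ->
  a ^+ 2 + b ^+ 2 <= 1 -> 2 - 2 * Num.sqrt (1 - (a ^+ 2 + b ^+ 2)) <= 8 * d.
Proof.
move=> ea eb m1 m2 ab1; set S := Num.sqrt _.
have S0 : 0 <= S by rewrite sqrtr_ge0.
have S2 : S ^+ 2 = 1 - (a ^+ 2 + b ^+ 2) by rewrite sqr_sqrtr // subr_ge0.
have parallelogram : a ^+ 2 + b ^+ 2 <= 8 * (u1 ^+ 2 + v1 ^+ 2 + (u2 ^+ 2 + v2 ^+ 2)).
  have -> : a = 2 * (u1 + u2) by lra.
  have -> : b = 2 * (v1 + v2) by lra.
  by have := sqr_ge0 (u1 - u2); have := sqr_ge0 (v1 - v2); nra.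
have : (1 - 4 * d) ^+ 2 <= S ^+ 2 by rewrite S2; nra.
nra.
Qed.

Section LowerBound.
Local Open Scope complex_scope.
Variable R : realType.
Local Notation Re := (@complex.Re R).
Local Notation Im := (@complex.Im R).

Lemma coupling_cost_ge (r1 r2 : 'rV[R]_3) (P : 'M[R[i]]_4) (x : R) :
  cz r1 = 0 -> cz r2 = 0 -> coupling (bloch r1) (bloch r2) P ->
  \tr (P *m Cz2 R) = x%:C ->
  cx r1 ^+ 2 + cy r1 ^+ 2 <= 1 -> cx r2 ^+ 2 + cy r2 ^+ 2 <= 1 ->
  2 - 2 * Num.sqrt (1 - (cx r1 ^+ 2 + cy r1 ^+ 2)) <= x /\
  2 - 2 * Num.sqrt (1 - (cx r2 ^+ 2 + cy r2 ^+ 2)) <= x.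
Proof.
move=> z1 z2 PC cost n1 n2; have P_psd : psd P by case: PC => [[]].
have [e2 e0 e3 omega01 rho01] := coupling_equatorial_entries z1 z2 PC.
have ord_neq a b : (a < 4)%N -> (b < 4)%N -> a != b -> (inord a : 'I_4) != inord b.
  by move=> a4 b4 ab; rewrite -val_eqE /= !inordK.
have := psd_minor2 P_psd (ord_neq 0%N 2%N isT isT isT).
have := psd_minor2 P_psd (ord_neq 1%N 3%N isT isT isT).
have := psd_minor2 P_psd (ord_neq 0%N 1%N isT isT isT).
have := psd_minor2 P_psd (ord_neq 2%N 3%N isT isT isT).
move=> m23 m01 m13 m02; rewrite e0 e2 e3 in m01 m23 m02 m13.
have -> : x = 8 * Re (P (inord 1) (inord 1)).
  move: (congr1 Re cost); rewrite trace_mul_Cz2 raddfMn raddfD /= e2 => <-.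
  by rewrite -mulr_natl; ring.
split.
- apply: (split_sum_cost_bound _ _ m01 m23 n1).
  + by move: (congr1 Re rho01); rewrite raddfD.
  + by move: (congr1 Im rho01); rewrite raddfD.
- rewrite -[cy r2 ^+ 2]sqrrN; apply: (split_sum_cost_bound _ _ m02 m13); last by rewrite sqrrN.
  + by move: (congr1 Re omega01); rewrite raddfD.
  + by move: (congr1 Im omega01); rewrite raddfD /= => ->; rewrite mulNr.
Qed.

End LowerBound.

Lemma mul_div_of_disk (R : realFieldType) (x y M : R) :
  x ^+ 2 + y ^+ 2 <= M ^+ 2 -> M * (x / M) = x.
Proof.
have [->|M0 _] := eqVneq M 0; last by rewrite mulrC divfK.
rewrite expr0n /= mul0r => xy0; apply/eqP; rewrite eq_sym -sqrf_eq0 eq_le sqr_ge0 andbT.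
by have := sqr_ge0 y; lra.
Qed.

Lemma div_disk_le1 (R : realFieldType) (x y M : R) :
  x ^+ 2 + y ^+ 2 <= M ^+ 2 -> (x / M) ^+ 2 + (y / M) ^+ 2 <= 1.
Proof.
have [->|M0] := eqVneq M 0; first by rewrite invr0 !mulr0 expr0n /= addr0 ler01.
have M2 : 0 < M ^+ 2 by rewrite lt0r sqr_ge0 sqrf_eq0 M0.
by rewrite !expr_div_n -mulrDl ler_pdivrMr // mul1r.
Qed.

Section UpperBound.
Local Open Scope complex_scope.
Variable R : realType.
Local Notation C := R[i].
Local Notation Re := (@complex.Re R).
Local Notation Im := (@complex.Im R).

(* For |A| = |B| = 1 this is the pure state of (p, qA, qB, pAB); for A, B in the unit
   disk every factor |A|^2 or |B|^2 of that matrix is replaced by 1, which keeps the marginals. *)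
Definition equatorial_coupling_entry (p q : R) (A B : C) (i j : nat) : C :=
  let P := p%:C in let Q := q%:C in
  match i, j with
  | 0, 0 => P * P     | 0, 1 => P * Q * conjc A     | 0, 2 => P * Q * conjc B
  | 0, 3 => P * P * conjc A * conjc B
  | 1, 0 => P * Q * A | 1, 1 => Q * Q                 | 1, 2 => Q * Q * A * conjc B
  | 1, 3 => P * Q * conjc B
  | 2, 0 => P * Q * B | 2, 1 => Q * Q * conjc A * B   | 2, 2 => Q * Q
  | 2, 3 => P * Q * conjc A
  | 3, 0 => P * P * A * B | 3, 1 => P * Q * B | 3, 2 => P * Q * A | 3, 3 => P * P
  | _, _ => 0
  end.

Definition equatorial_coupling p q A B : 'M[C]_4 :=
  \matrix_(i, j) equatorial_coupling_entry p q A B i j.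

Lemma equatorial_couplingE p q A B (i j : nat) : (i < 4)%N -> (j < 4)%N ->
  equatorial_coupling p q A B (inord i) (inord j) = equatorial_coupling_entry p q A B i j.
Proof. by move=> i4 j4; rewrite mxE !inordK. Qed.

Lemma conjcD (z w : C) : conjc (z + w) = conjc z + conjc w. Proof. exact: rmorphD. Qed.
Lemma conjcM (z w : C) : conjc (z * w) = conjc z * conjc w. Proof. exact: rmorphM. Qed.

Lemma unit_disk_ge0 (A : C) : Re A ^+ 2 + Im A ^+ 2 <= 1 -> 0 <= 1 - A * conjc A.
Proof.
case: A => a b /= ab1; have -> : 1 - (a +i* b) * conjc (a +i* b) = (1 - (a ^+ 2 + b ^+ 2))%:C.
  by apply/eqP; rewrite eq_complex /=; apply/andP; split; apply/eqP; ring.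
by rewrite ler0c subr_ge0.
Qed.

Lemma equatorial_coupling_psd p q A B :
  Re A ^+ 2 + Im A ^+ 2 <= 1 -> Re B ^+ 2 + Im B ^+ 2 <= 1 ->
  psd (equatorial_coupling p q A B).
Proof.
move=> /unit_disk_ge0 A1 /unit_disk_ge0 B1; split.
  apply/matrixP => i j; rewrite /adj !mxE; case: A {A1} => a1 a2; case: B {B1} => b1 b2.
  case: i => [[|[|[|[|//]]]] ?]; case: j => [[|[|[|[|//]]]] ?] /=; simpc;
    apply/eqP; rewrite eq_complex /=; apply/andP; split; apply/eqP; ring.
move=> v; rewrite quadratic_formE !big_ord4 !equatorial_couplingE //=.
set z0 := v (inord 0) 0; set z1 := v (inord 1) 0.
set z2 := v (inord 2) 0; set z3 := v (inord 3) 0.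
set P := p%:C; set Q := q%:C.
have cP : conjc P = P by rewrite conjc_real.
have cQ : conjc Q = Q by rewrite conjc_real.
pose w := P * z0 + Q * conjc A * z1 + Q * conjc B * z2 + P * conjc A * conjc B * z3.
pose wA := Q * z1 + P * conjc B * z3.
pose wB := Q * z2 + P * conjc A * z3.
have ew : conjc w = P * conjc z0 + Q * A * conjc z1 + Q * B * conjc z2 + P * A * B * conjc z3.
  by rewrite /w !(conjcD, conjcM) !conjcK cP cQ.
have ewA : conjc wA = Q * conjc z1 + P * B * conjc z3.
  by rewrite /wA !(conjcD, conjcM) !conjcK cP cQ.
have ewB : conjc wB = Q * conjc z2 + P * A * conjc z3.
  by rewrite /wB !(conjcD, conjcM) !conjcK cP cQ.
have -> : conjc z0 * (P * P) * z0 + conjc z0 * (P * Q * conjc A) * z1 +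
      conjc z0 * (P * Q * conjc B) * z2 + conjc z0 * (P * P * conjc A * conjc B) * z3 +
    (conjc z1 * (P * Q * A) * z0 + conjc z1 * (Q * Q) * z1 +
      conjc z1 * (Q * Q * A * conjc B) * z2 + conjc z1 * (P * Q * conjc B) * z3) +
    (conjc z2 * (P * Q * B) * z0 + conjc z2 * (Q * Q * conjc A * B) * z1 +
      conjc z2 * (Q * Q) * z2 + conjc z2 * (P * Q * conjc A) * z3) +
    (conjc z3 * (P * P * A * B) * z0 + conjc z3 * (P * Q * B) * z1 +
      conjc z3 * (P * Q * A) * z2 + conjc z3 * (P * P) * z3) =
  w * conjc w +
    (1 - A * conjc A) * (wA * conjc wA + P * P * (1 - B * conjc B) * (z3 * conjc z3)) +
    (1 - B * conjc B) * (wB * conjc wB).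
  by rewrite ew ewA ewB /w /wA /wB; ring.
have PP : 0 <= P * P by rewrite -rmorphM ler0c -expr2 sqr_ge0.
apply: addr_ge0; first apply: addr_ge0; first exact: mulcJ_ge0.
- apply: mulr_ge0 => //; apply: addr_ge0; first exact: mulcJ_ge0.
  by apply: mulr_ge0; [apply: mulr_ge0 | exact: mulcJ_ge0].
- by apply: mulr_ge0 => //; exact: mulcJ_ge0.
Qed.

Lemma equatorial_coupling_cost p q A B :
  \tr (equatorial_coupling p q A B *m Cz2 R) = (8 * q ^+ 2)%:C.
Proof.
rewrite trace_mul_Cz2 !equatorial_couplingE //= -!rmorphM -rmorphD -rmorphMn.
by congr (_%:C); rewrite -mulr_natl; ring.
Qed.

Lemma equatorial_coupling_trace p q A B :
  p * p + q * q = 1 / 2 -> \tr (equatorial_coupling p q A B) = 1.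
Proof.
move=> pq; rewrite /mxtrace big_ord4 !equatorial_couplingE //= -!rmorphM -!rmorphD.
by rewrite -(rmorph1 (real_complex R)); congr (_%:C); lra.
Qed.

Lemma equatorial_coupling_marginals (r1 r2 : 'rV[R]_3) p q A B :
  cz r1 = 0 -> cz r2 = 0 -> p * p + q * q = 1 / 2 ->
  cx r1 = 4 * p * q * Re A -> cy r1 = - (4 * p * q * Im A) ->
  cx r2 = 4 * p * q * Re B -> cy r2 = 4 * p * q * Im B ->
  ptr_Hdual (equatorial_coupling p q A B) = bloch r2 /\
  ptr_H (equatorial_coupling p q A B) = (bloch r1)^T.
Proof.
move=> z1 z2 pq; case: A => a1 a2; case: B => b1 b2 /= x1 y1 x2 y2.
have [b1_00 b1_11 b1_01 b1_10] := bloch_equatorial z1.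
have [b2_00 b2_11 b2_01 b2_10] := bloch_equatorial z2.
split; apply/matrixP => i j; [|rewrite [RHS]mxE];
  case: (ord2_inord i) => ->; case: (ord2_inord j) => ->;
  rewrite mxE big_ord2 ?tidx00 ?tidx01 ?tidx10 ?tidx11 !equatorial_couplingE //.
1-4: rewrite ?b2_00 ?b2_11 ?b2_01 ?b2_10.
5-8: rewrite ?b1_00 ?b1_11 ?b1_01 ?b1_10.
all: simpc; apply/eqP; rewrite eq_complex /=; apply/andP; split; apply/eqP.
all: rewrite ?x1 ?y1 ?x2 ?y2; lra.
Qed.

Lemma equatorial_coupling_cost_attained (r1 r2 : 'rV[R]_3) (M : R) :
  cz r1 = 0 -> cz r2 = 0 -> 0 <= M -> M <= 1 ->
  cx r1 ^+ 2 + cy r1 ^+ 2 <= M ^+ 2 -> cx r2 ^+ 2 + cy r2 ^+ 2 <= M ^+ 2 ->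
  exists2 P, coupling (bloch r1) (bloch r2) P &
    \tr (P *m Cz2 R) = (2 - 2 * Num.sqrt (1 - M ^+ 2))%:C.
Proof.
move=> z1 z2 M0 M1 n1 n2; set S := Num.sqrt _.
have S0 : 0 <= S by rewrite sqrtr_ge0.
have S2 : S ^+ 2 = 1 - M ^+ 2 by rewrite sqr_sqrtr // subr_ge0 expr_le1.
have S1 : S <= 1 by nra.
set p := Num.sqrt ((1 + S) / 4); set q := Num.sqrt ((1 - S) / 4).
have pp : p * p = (1 + S) / 4 by rewrite -expr2 sqr_sqrtr // divr_ge0 // addr_ge0.
have qq : q * q = (1 - S) / 4 by rewrite -expr2 sqr_sqrtr // divr_ge0 // subr_ge0.
have pq : 4 * p * q = M :> R.
  rewrite -mulrA -sqrtrM ?divr_ge0 ?addr_ge0 //.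
  have -> : (1 + S) / 4 * ((1 - S) / 4) = (M / 4) ^+ 2.
    have M2 : M ^+ 2 = 1 - S ^+ 2 by rewrite S2; ring.
    by rewrite expr_div_n M2; field.
  by rewrite sqrtr_sqr ger0_norm ?divr_ge0 //; field.
exists (equatorial_coupling p q ((cx r1 / M) -i* (cy r1 / M)) ((cx r2 / M) +i* (cy r2 / M))).
  split; first split.
  - by apply: equatorial_coupling_psd; rewrite /= ?sqrrN; apply: div_disk_le1.
  - by apply: equatorial_coupling_trace; lra.
  rewrite /=; apply: equatorial_coupling_marginals => //; first lra.
  - by rewrite /= pq (mul_div_of_disk n1).
  - by rewrite /= pq mulrN opprK (@mul_div_of_disk _ _ (cx r1)) // addrC.
  - by rewrite /= pq (mul_div_of_disk n2).
  - by rewrite /= pq (@mul_div_of_disk _ _ (cx r2)) // addrC.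
rewrite equatorial_coupling_cost; congr (_%:C); rewrite expr2 qq; lra.
Qed.

End UpperBound.

Lemma inf_attained (R : realType) (E : set R) x : E x -> lbound E x -> inf E = x.
Proof.
move=> Ex xE; apply/eqP; rewrite eq_le; apply/andP; split.
  by apply: ge_inf => //; exists x.
by apply: lb_le_inf => //; exists x.
Qed.

Section EquatorialDistance.
Variable R : realType.

Lemma dot3_ez (r : 'rV[R]_3) : dot3 r (ez R) = cz r.
Proof. by rewrite /dot3 big_ord3 !mxE /= !inordK //= /cz; ring. Qed.

Lemma norm3_ge0 (r : 'rV[R]_3) : 0 <= norm3 r.
Proof. exact: sqrtr_ge0. Qed.

Lemma sqr_norm3_equatorial (r : 'rV[R]_3) : cz r = 0 -> norm3 r ^+ 2 = cx r ^+ 2 + cy r ^+ 2.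
Proof.
rewrite /norm3 /dot3 big_ord3 /cx /cy /cz => ->.
by rewrite sqr_sqrtr ?addr_ge0 ?sqr_ge0 // mul0r addr0 -!expr2.
Qed.

Lemma D2z_equatorial (r1 r2 : 'rV[R]_3) :
  cz r1 = 0 -> cz r2 = 0 -> norm3 r1 <= 1 -> norm3 r2 <= 1 ->
  D2z (bloch r1) (bloch r2) = 2 - 2 * Num.sqrt (1 - Num.max (norm3 r1) (norm3 r2) ^+ 2).
Proof.
move=> z1 z2 h1 h2; set M := Num.max _ _.
have [M0 M1] : 0 <= M /\ M <= 1 by rewrite /M ge_max h1 h2 le_max norm3_ge0.
have disk (r : 'rV[R]_3) (x : R) :
    cz r = 0 -> 0 <= x -> norm3 r <= x -> cx r ^+ 2 + cy r ^+ 2 <= x ^+ 2.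
  by move=> z x0 rx; rewrite -sqr_norm3_equatorial // ler_pXn2r ?nnegrE ?norm3_ge0.
have r1M : norm3 r1 <= M by rewrite /M le_max lexx.
have r2M : norm3 r2 <= M by rewrite /M le_max lexx orbT.
have [P PC Pcost] := equatorial_coupling_cost_attained z1 z2 M0 M1
  (disk _ _ z1 M0 r1M) (disk _ _ z2 M0 r2M).
apply: inf_attained; first by exists P.
move=> x [Q [QC Qcost]].
have := disk _ _ z1 ler01 h1; have := disk _ _ z2 ler01 h2; rewrite expr1n => d2 d1.
have := coupling_cost_ge z1 z2 QC Qcost d1 d2.
have M_cases : M = norm3 r1 \/ M = norm3 r2 by rewrite /M; case: leP; [right|left].
by rewrite -!sqr_norm3_equatorial //; case: M_cases => -> [].
Qed.

End EquatorialDistance.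

Theorem corollary3p7 (R : realType) (r1 r2 : 'rV[R]_3) :
  norm3 r1 <= 1 -> norm3 r2 <= 1 ->
  dot3 r1 (ez R) = 0 -> dot3 r2 (ez R) = 0 ->
  dz2 (bloch r1) (bloch r2) ^+ 2 =
    Num.sqrt (1 - Num.min (norm3 r1) (norm3 r2) ^+ 2)
    - Num.sqrt (1 - Num.max (norm3 r1) (norm3 r2) ^+ 2).
Proof.
rewrite !dot3_ez => h1 h2 z1 z2.
rewrite /dz2 (D2z_equatorial z1 z2 h1 h2) (D2z_equatorial z1 z1 h1 h1).
rewrite (D2z_equatorial z2 z2 h2 h2) !maxxx.
have anti (a b : R) : 0 <= a -> a <= b ->
    Num.sqrt (1 - b ^+ 2) <= Num.sqrt (1 - a ^+ 2).
  by move=> a0 ab; apply: ler_wsqrtr; rewrite lerB // ler_pXn2r ?nnegrE // (le_trans a0 ab).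
have [le|/ltW le] := leP (norm3 r1) (norm3 r2).
- have s := anti _ _ (norm3_ge0 r1) le.
  by rewrite [LHS]sqr_sqrtr; [field | lra].
- have s := anti _ _ (norm3_ge0 r2) le.
  by rewrite [LHS]sqr_sqrtr; [field | lra].
Qed.
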